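(* Let $F$ be a field of characteristic zero and let $A=A_0\oplus A_1$ be a unitary superalgebra over $F$ such that $A\cong F\dotplus J(A)$ (with $F$ identified with $F\cdot 1$ and $J(A)$ the Jacobson radical of $A$) and $A_0\not\subseteq Z(A)$. Then $Z(A)\cong F\dotplus J'$, where $J'=J(A)\cap Z(A)$. Moreover, if $J'$ is a graded ideal of $A$, then $C^{gr}(A)$ is a $T_2$-ideal of $F\langle Y,Z\rangle$.
   Context: A superalgebra is an associative algebra $A=A_0\oplus A_1$ with $A_iA_j\subseteq A_{i+j \bmod 2}$; $Z(A)$ is the center of $A$. An ideal $I$ is graded if $I=(I\cap A_0)\oplus(I\cap A_1)$. $F\langle Y,Z\rangle$ is the free associative algebra over $F$ on disjoint countable sets $Y=\{y_1,y_2,\dots\}$ (even variables) and $Z=\{z_1,z_2,\dots\}$ (odd variables), graded by the parity of the degree in the $Z$-variables. A polynomial $f(y_1,\dots,y_r,z_1,\dots,z_s)$ is a central graded polynomial of $A$ if it has zero constant term and $f(a_1,\dots,a_r,b_1,\dots,b_s)\in Z(A)$ for all $a_i\in A_0$, $b_j\in A_1$; $C^{gr}(A)$ is the set of all such polynomials. A $T_2$-ideal is an ideal of $F\langle Y,Z\rangle$ invariant under all grading-preserving endomorphisms of $F\langle Y,Z\rangle$. *)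

From HB Require Import structures.
From mathcomp Require Import all_boot all_order all_algebra.
From mathcomp Require Import finmap.
From mathcomp.multinomials Require Import monalg.
Set Implicit Arguments. Unset Strict Implicit. Unset Printing Implicit Defensive.
Import GRing.Theory.
Local Open Scope ring_scope.

Definition is_ideal (R : pzRingType) (I : R -> Prop) : Prop :=
  [/\ I 0, (forall x y, I x -> I y -> I (x + y)),
      (forall a x, I x -> I (a * x)) & (forall a x, I x -> I (x * a))].

Section AlgebraNotions.
Variables (F : fieldType) (A : algType F).

Definition center (x : A) : Prop := forall y : A, x * y = y * x.

Definition is_left_ideal (I : A -> Prop) : Prop :=
  [/\ I 0, (forall x y, I x -> I y -> I (x + y)) & (forall a x, I x -> I (a * x))].

Definition is_maximal_left_ideal (I : A -> Prop) : Prop :=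
  [/\ is_left_ideal I, ~ I 1 &
      forall K : A -> Prop, is_left_ideal K -> ~ K 1 ->
        (forall x, I x -> K x) -> forall x, K x -> I x].

Definition jacobson (x : A) : Prop :=
  forall I : A -> Prop, is_maximal_left_ideal I -> I x.

Definition is_subspace (V : A -> Prop) : Prop :=
  [/\ V 0, (forall x y, V x -> V y -> V (x + y)) & (forall (k : F) x, V x -> V (k *: x))].

Definition is_superalgebra (A0 A1 : A -> Prop) : Prop :=
  [/\ is_subspace A0, is_subspace A1,
      (forall x, A0 x -> A1 x -> x = 0),
      (forall x, exists x0 x1, [/\ A0 x0, A1 x1 & x = x0 + x1]) &
      [/\ (forall x y, A0 x -> A0 y -> A0 (x * y)),
          (forall x y, A0 x -> A1 y -> A1 (x * y)),
          (forall x y, A1 x -> A0 y -> A1 (x * y)) &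
          (forall x y, A1 x -> A1 y -> A0 (x * y))]].

Definition is_graded (A0 A1 I : A -> Prop) : Prop :=
  forall x, I x -> exists x0 x1, [/\ A0 x0, I x0, A1 x1, I x1 & x = x0 + x1].

End AlgebraNotions.

(* (false, i) is the even variable y_i, (true, i) the odd variable z_i.*)

Definition var := (bool * nat)%type.

Definition FreeAlg (F : fieldType) := {malg F[{fmonom var}]}.

Definition wparity (m : {fmonom var}) : bool := odd (count (fun v : var => v.1) (m : seq var)).

Definition homogeneous (F : fieldType) (b : bool) (f : FreeAlg F) : Prop :=
  forall m, m \in msupp f -> wparity m = b.

Definition peval (F : fieldType) (A : algType F) (ev : var -> A) (f : FreeAlg F) : A :=
  \sum_(m <- msupp f) f@_m *: \prod_(v <- (m : seq var)) ev v.

Definition central_graded (F : fieldType) (A : algType F) (A0 A1 : A -> Prop)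
    (f : FreeAlg F) : Prop :=
  f@_(mone : {fmonom var}) = 0 /\
  forall ev : var -> A,
    (forall i, A0 (ev (false, i))) -> (forall i, A1 (ev (true, i))) ->
    center (peval ev f).

Definition is_T2_ideal (F : fieldType) (I : FreeAlg F -> Prop) : Prop :=
  is_ideal I /\
  forall phi : {lrmorphism FreeAlg F -> FreeAlg F},
    (forall b f, homogeneous b f -> homogeneous b (phi f)) ->
    forall f, I f -> I (phi f).

From HB Require Import structures.
From mathcomp Require Import all_boot all_order all_algebra.
From mathcomp Require Import finmap.
From mathcomp.multinomials Require Import monalg.
From Stdlib Require Import ClassicalEpsilon.
Set Implicit Arguments. Unset Strict Implicit. Unset Printing Implicit Defensive.
Import GRing.Theory.
Local Open Scope ring_scope.

(* Write A = F1 + J with J = J(A). The grading automorphism x0 + x1 |-> x0 - x1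
   permutes the maximal left ideals, hence preserves J; as char F = 0 this puts
   every odd element in J. So under a graded substitution every variable is, modulo
   J, a scalar w_v, with w_v = 0 for odd v, and a central graded polynomial f
   satisfies f(ev) = f(w) mod J. Substituting w_v t for the variables turns f into
   a polynomial q(t) that is central at every even t. In characteristic 0 the
   forward difference q(t + 1) - q(t) lowers the degree, so an even non-central
   element forces q to be constant, equal to q(0) = f(0) = 0; thus f(w) = q(1) = 0
   and f takes values in J' = J cap Z(A). When J' is an ideal this makes C^gr(A)
   an ideal. A graded endomorphism phi turns graded substitutions into graded
   substitutions, so phi(f) is again central on them, and its constant term, the
   value of phi(f) at 0, is a scalar in J, hence 0. *)

Section Subspace.
Variables (F : fieldType) (A : algType F) (V : A -> Prop).
Hypothesis subV : is_subspace V.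

Lemma subspace0 : V 0. Proof. by case: subV. Qed.
Lemma subspaceD x y : V x -> V y -> V (x + y). Proof. by case: subV => _ + _; apply. Qed.
Lemma subspaceZ k x : V x -> V (k *: x). Proof. by case: subV => _ _; apply. Qed.
Lemma subspaceN x : V x -> V (- x).
Proof. by move=> Vx; rewrite -scaleN1r; apply: subspaceZ. Qed.
Lemma subspaceB x y : V x -> V y -> V (x - y).
Proof. by move=> Vx Vy; apply: subspaceD => //; apply: subspaceN. Qed.
End Subspace.

Section Center.
Variables (F : fieldType) (A : algType F).
Implicit Types x y : A.

Lemma center0 : center (0 : A). Proof. by move=> y; rewrite mul0r mulr0. Qed.
Lemma centerD x y : center x -> center y -> center (x + y).
Proof. by move=> cx cy z; rewrite mulrDl mulrDr cx cy. Qed.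
Lemma centerN x : center x -> center (- x).
Proof. by move=> cx z; rewrite mulNr mulrN cx. Qed.
Lemma centerB x y : center x -> center y -> center (x - y).
Proof. by move=> cx cy; apply: centerD => //; apply: centerN. Qed.
Lemma centerZ k x : center x -> center (k *: x).
Proof. by move=> cx z; rewrite -scalerAl -scalerAr cx. Qed.
Lemma center_alg k : center (k%:A : A).
Proof. by move=> z; rewrite mulr_algl mulr_algr. Qed.
End Center.

Section Jacobson.
Variables (F : fieldType) (A : algType F).
Implicit Types x y : A.

Lemma jacobson0 : jacobson (0 : A). Proof. by move=> I [[]]. Qed.
Lemma jacobsonD x y : jacobson x -> jacobson y -> jacobson (x + y).
Proof.
by move=> Jx Jy I maxI; case: (maxI) => [[_ ID _]] _ _; apply: ID; [apply: Jx | apply: Jy].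
Qed.
Lemma jacobsonMl a x : jacobson x -> jacobson (a * x).
Proof. by move=> Jx I maxI; case: (maxI) => [[_ _ IM]] _ _; apply: IM; apply: Jx. Qed.
Lemma jacobsonZ k x : jacobson x -> jacobson (k *: x).
Proof. by rewrite -mulr_algl; apply: jacobsonMl. Qed.

Section Automorphism.
Variable s : A -> A.
Hypotheses (sD : {morph s : x y / x + y}) (sM : {morph s : x y / x * y}).
Hypotheses (s1 : s 1 = 1) (sK : involutive s).

Lemma maximal_left_ideal_preim I :
  is_maximal_left_ideal I -> is_maximal_left_ideal (fun x => I (s x)).
Proof.
have s0 : s 0 = 0 by apply: (addrI (s 0)); rewrite -sD !addr0.
have preim_left K : is_left_ideal K -> is_left_ideal (fun x => K (s x)).
  by case=> K0 KD KM; split=> [|x y|b x]; rewrite ?s0 ?sD ?sM; auto.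
case=> I_left I1 I_max; split; [exact: preim_left | by rewrite s1 |].
move=> K K_left K1 IK x Kx.
have KsI y : K (s y) -> I y.
  apply: (I_max (fun y => K (s y))); [exact: preim_left | by rewrite s1 |].
  by move=> z Iz; apply: IK; rewrite sK.
by apply: KsI; rewrite sK.
Qed.

Lemma jacobson_automorphism x : jacobson x -> jacobson (s x).
Proof. by move=> Jx I maxI; apply: Jx _ (maximal_left_ideal_preim maxI). Qed.
End Automorphism.

Section ScalarPlusRadical.
Hypothesis decA : forall a : A, exists (k : F) (j : A), jacobson j /\ a = k%:A + j.

Lemma jacobsonMr x a : jacobson x -> jacobson (x * a).
Proof.
move=> Jx; have [k [j [Jj ->]]] := decA a.
by rewrite mulrDr mulr_algr; apply: jacobsonD; [apply: jacobsonZ | apply: jacobsonMl].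
Qed.

Lemma jacobson_prodB (I : Type) (r : seq I) (e1 e2 : I -> A) :
  (forall i, jacobson (e1 i - e2 i)) ->
  jacobson (\prod_(i <- r) e1 i - \prod_(i <- r) e2 i).
Proof.
move=> Je; elim: r => [|i r IHr]; first by rewrite !big_nil subrr; apply: jacobson0.
set P1 := \prod_(j <- r) e1 j; set P2 := \prod_(j <- r) e2 j.
rewrite !big_cons (_ : _ - _ = (e1 i - e2 i) * P1 + e2 i * (P1 - P2)); last first.
  by rewrite mulrBl mulrBr addrA subrK.
by apply: jacobsonD; [apply: jacobsonMr | apply: jacobsonMl].
Qed.

Lemma jacobson_pevalB (ev1 ev2 : var -> A) (f : FreeAlg F) :
  (forall v, jacobson (ev1 v - ev2 v)) -> jacobson (peval ev1 f - peval ev2 f).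
Proof.
move=> Jev; rewrite /peval -sumrB; apply: (big_ind (fun x : A => jacobson x)) => [|x y|m _].
- exact: jacobson0.
- exact: jacobsonD.
by rewrite -scalerBr; apply: jacobsonZ; apply: jacobson_prodB.
Qed.

Lemma center_decomposition z : center z ->
  exists (k : F) (j : A), [/\ jacobson j, center j & z = k%:A + j].
Proof.
move=> cz; have [k [j [Jj def_z]]] := decA z; exists k, j; split=> //.
have -> : j = z - k%:A by rewrite def_z addrC addKr.
by apply: centerB => //; apply: center_alg.
Qed.
End ScalarPlusRadical.
End Jacobson.

Section Superalgebra.
Variables (F : fieldType) (A : algType F) (A0 A1 : A -> Prop).
Hypothesis superA : is_superalgebra A0 A1.

Definition component (b : bool) : A -> Prop := if b then A1 else A0.

Lemma component_subspace b : is_subspace (component b).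
Proof. by case: superA => ? ? _ _ _; case: b. Qed.

Lemma even_subspace : is_subspace A0. Proof. exact: component_subspace false. Qed.
Lemma odd_subspace : is_subspace A1. Proof. exact: component_subspace true. Qed.

Lemma componentM b c x y :
  component b x -> component c y -> component (b (+) c) (x * y).
Proof. by case: superA => _ _ _ _ [? ? ? ?]; case: b; case: c => /=; auto. Qed.

Lemma decomposition_uniq u w u' w' : A0 u -> A1 w -> A0 u' -> A1 w' ->
  u + w = u' + w' -> u = u' /\ w = w'.
Proof.
move=> u0 w1 u'0 w'1 eq_uw.
have eq_d : u - u' = w' - w.
  by apply/eqP; rewrite subr_eq addrAC [w' + u']addrC -eq_uw addrK.
have d0 : u - u' = 0.
  case: superA => _ _ A01 _ _; apply: A01; first exact: (subspaceB even_subspace).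
  by rewrite eq_d; exact: (subspaceB odd_subspace).
by split; apply/eqP; rewrite -subr_eq0 ?d0 // -opprB -eq_d d0 oppr0.
Qed.

Lemma even1 : A0 1.
Proof.
case: superA => _ _ A01 decA _; have [e0 [e1 [e0_even e1_odd def1]]] := decA 1.
have e0e1 : e0 * e1 = 0.
  have := mulr1 e0; rewrite {1}def1 mulrDr -[RHS]addr0 => /decomposition_uniq.
  by case=> //; [apply: (componentM (b := false) (c := false)) |
    apply: (componentM (b := false) (c := true)) | apply: subspace0 odd_subspace].
have e1_even : A0 e1.
  have := mul1r e1; rewrite {1}def1 mulrDl e0e1 add0r => <-.
  exact: (componentM (b := true) (c := true)).
by rewrite def1 (A01 e1) ?addr0.
Qed.

Lemma grading_involution_exists :
  exists s : A -> A, forall u w, A0 u -> A1 w -> s (u + w) = u - w.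
Proof.
have [d dP] : exists d : A -> A * A,
    forall x, [/\ A0 (d x).1, A1 (d x).2 & x = (d x).1 + (d x).2].
  apply: (choice (fun x (p : A * A) => [/\ A0 p.1, A1 p.2 & x = p.1 + p.2])) => x.
  by case: superA => _ _ _ decA _; have [x0 [x1 ?]] := decA x; exists (x0, x1).
exists (fun x => (d x).1 - (d x).2) => u w u0 w1.
have [d0 d1 def_uw] := dP (u + w).
by have [-> ->] := decomposition_uniq d0 d1 u0 w1 (esym def_uw).
Qed.

Section GradingInvolution.
Variable s : A -> A.
Hypothesis sE : forall u w, A0 u -> A1 w -> s (u + w) = u - w.

Lemma grading_inv_even u : A0 u -> s u = u.
Proof. by move=> u0; have := sE u0 (subspace0 odd_subspace); rewrite !addr0 subr0. Qed.

Lemma grading_inv_odd w : A1 w -> s w = - w.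
Proof. by move=> w1; have := sE (subspace0 even_subspace) w1; rewrite !add0r. Qed.

Lemma grading_inv_decomposition x :
  exists u w, [/\ A0 u, A1 w, x = u + w & s x = u - w].
Proof.
case: superA => _ _ _ decA _; have [u [w [u0 w1 def_x]]] := decA x.
by exists u, w; split; rewrite // def_x sE.
Qed.

Lemma grading_invD : {morph s : x y / x + y}.
Proof.
move=> x y; have [u [w [u0 w1 -> ->]]] := grading_inv_decomposition x.
have [u' [w' [u'0 w'1 -> ->]]] := grading_inv_decomposition y.
rewrite addrACA sE; first by rewrite opprD addrACA.
  exact: (subspaceD even_subspace).
exact: (subspaceD odd_subspace).
Qed.

Lemma grading_invM : {morph s : x y / x * y}.
Proof.
move=> x y; have [u [w [u0 w1 -> ->]]] := grading_inv_decomposition x.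
have [u' [w' [u'0 w'1 -> ->]]] := grading_inv_decomposition y.
rewrite (_ : _ * _ = (u * u' + w * w') + (u * w' + w * u')); last first.
  by rewrite mulrDl !mulrDr [w * u' + _]addrC addrACA.
rewrite sE; first by rewrite mulrBl !mulrBr opprB opprD addrACA.
  apply: (subspaceD even_subspace).
    exact: (componentM (b := false) (c := false)).
  exact: (componentM (b := true) (c := true)).
apply: (subspaceD odd_subspace).
  exact: (componentM (b := false) (c := true)).
exact: (componentM (b := true) (c := false)).
Qed.

Lemma grading_invK : involutive s.
Proof.
move=> x; have [u [w [u0 w1 -> ->]]] := grading_inv_decomposition x.
by rewrite sE ?opprK //; apply: (subspaceN odd_subspace).
Qed.

Lemma jacobson_grading_inv x : jacobson x -> jacobson (s x).
Proof.
exact: (jacobson_automorphism (s := s) grading_invD grading_invM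
  (grading_inv_even even1) grading_invK).
Qed.
End GradingInvolution.

Hypothesis charF0 : [pchar F] =i pred0.
Hypothesis radical_scalar : forall k : F, jacobson (k%:A : A) -> k = 0.

Lemma odd_scalar_part_eq0 x k : A1 x -> jacobson (x - k%:A) -> k = 0.
Proof.
move=> x_odd Jxk; have [s sE] := grading_involution_exists.
have Jsxk : jacobson (- x - k%:A).
  have := jacobson_grading_inv sE Jxk.
  rewrite (grading_invD sE) (grading_inv_odd sE x_odd) (grading_inv_even sE) //.
  by apply: (subspaceN even_subspace); apply: (subspaceZ even_subspace); exact: even1.
have /radical_scalar/eqP : jacobson ((- (k *+ 2))%:A : A).
  have := jacobsonD Jxk Jsxk.
  by rewrite addrACA subrr add0r -opprD -mulr2n scaleNr scalerMnl.
rewrite oppr_eq0 -mulr_natr mulf_eq0 => /orP [/eqP // |].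
by move/pcharf0P: charF0 => ->.
Qed.

Lemma component_prod (I : Type) (r : seq I) (p : pred I) (e : I -> A) :
  (forall i, component (p i) (e i)) ->
  component (odd (count p r)) (\prod_(i <- r) e i).
Proof.
move=> e_comp; elim: r => [|i r IHr]; first by rewrite big_nil; exact: even1.
by rewrite big_cons /= oddD oddb; apply: componentM.
Qed.
End Superalgebra.

Section ForwardDifference.
Variable F : fieldType.
Implicit Types q : {poly F}.

Definition fdiff q := q \Po ('X + 1) - q.

Lemma coef_XaddC1_exp i k : (('X + 1) ^+ i : {poly F})`_k = 'C(i, k)%:R.
Proof.
elim: i k => [|i IHi] k; first by rewrite expr0 coef1; case: k.
rewrite exprSr mulrDr mulr1 coefD coefMX; case: k => [|k] /=.
  by rewrite IHi !bin0 add0r.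
by rewrite !IHi binS natrD addrC.
Qed.

Lemma coef_fdiff_top q k : (size q <= k.+2)%N -> (fdiff q)`_k = q`_k.+1 *+ k.+1.
Proof.
move=> le_q_k2; rewrite coefB coef_comp_poly.
rewrite (big_ord_widen k.+2 (fun i => q`_i * (('X + 1) ^+ i)`_k) le_q_k2) big_mkcond /=.
rewrite (eq_bigr (fun i : 'I_k.+2 => q`_i * (('X + 1) ^+ i)`_k)); last first.
  by move=> i _; case: ltnP => // /(nth_default 0) ->; rewrite mul0r.
rewrite !big_ord_recr /= big1 => [|i _]; last first.
  by rewrite coef_XaddC1_exp bin_small ?mulr0.
by rewrite !coef_XaddC1_exp add0r binn binSn mulr1 addrAC subrr add0r mulr_natr.
Qed.

Lemma size_fdiff_leq q : (size (fdiff q) <= (size q).-1)%N.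
Proof.
apply/leq_sizeP => k le_q_k; have le_q_k1 : (size q <= k.+1)%N by case: (size q) le_q_k.
by rewrite coef_fdiff_top ?(leqW le_q_k1) // nth_default ?mul0rn.
Qed.

Hypothesis charF0 : [pchar F] =i pred0.

Lemma size_fdiff q : size (fdiff q) = (size q).-1.
Proof.
apply/eqP; rewrite eqn_leq size_fdiff_leq /=.
case sq: (size q) => [|[|n]] //=.
have : lead_coef q != 0 by rewrite lead_coef_eq0 -size_poly_eq0 sq.
rewrite lead_coefE sq /= => lq_neq0.
rewrite ltnNge; apply/negP => /leq_sizeP /(_ n (leqnn n)) /eqP.
rewrite coef_fdiff_top ?sq // -mulr_natr mulf_eq0 (negbTE lq_neq0) /=.
by move/pcharf0P: charF0 => ->.
Qed.
End ForwardDifference.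

Section CentralPolynomial.
Variables (F : fieldType) (A : algType F).
Implicit Types p q r : {poly F}.

Lemma horner_algE (x : A) q : horner_alg x q = \sum_(i < size q) q`_i *: x ^+ i.
Proof.
rewrite -{1}[q]coefK poly_def linear_sum; apply: eq_bigr => i _.
by rewrite linearZ /= rmorphXn /= horner_algX mulr_algl.
Qed.

Lemma horner_alg_comp (x : A) p r :
  horner_alg x (p \Po r) = horner_alg (horner_alg x r) p.
Proof.
rewrite comp_polyE [RHS]horner_algE linear_sum; apply: eq_bigr => i _.
by rewrite linearZ /= rmorphXn mulr_algl.
Qed.

Lemma horner_alg_fdiff (x : A) q :
  horner_alg x (fdiff q) = horner_alg (x + 1) q - horner_alg x q.
Proof. by rewrite rmorphB /= horner_alg_comp rmorphD /= horner_algX rmorph1. Qed.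

Variable S : A -> Prop.
Hypothesis S_addr1 : forall x, S x -> S (x + 1).

Definition central_on q := forall x, S x -> center (horner_alg x q).

Lemma central_on_fdiff q : central_on q -> central_on (fdiff q).
Proof.
by move=> cq x Sx; rewrite horner_alg_fdiff; apply: centerB; apply: cq => //; apply: S_addr1.
Qed.

Hypothesis charF0 : [pchar F] =i pred0.
Variable a : A.
Hypotheses (Sa : S a) (a_noncentral : ~ center a).

Lemma central_on_size q : central_on q -> (size q <= 1)%N.
Proof.
move=> cq; rewrite leqNgt; apply/negP => q_gt1.
have [n sq] : exists n, size q = n.+2.
  by exists (size q).-2; move: q_gt1; case: (size q) => [|[|]].
elim: n q sq cq {q_gt1} => [|n IHn] q sq cq; last first.
  by apply: (IHn (fdiff q)); [rewrite size_fdiff ?sq | apply: central_on_fdiff].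
have : lead_coef q != 0 by rewrite lead_coef_eq0 -size_poly_eq0 sq.
rewrite lead_coefE sq /= => q1_neq0; apply: a_noncentral.
have := cq a Sa; rewrite horner_algE sq !big_ord_recr big_ord0 /= add0r expr0 expr1.
move=> /centerB /(_ (center_alg q`_0)); rewrite addrAC subrr add0r.
by move=> /(centerZ (q`_1)^-1); rewrite scalerA mulVf // scale1r.
Qed.
End CentralPolynomial.

Section FreeAlgebra.
Variable F : fieldType.

Section Evaluation.
Variables (A : algType F) (ev : var -> A).

Definition word_eval (m : {fmonom var}) : A := \prod_(v <- (m : seq var)) ev v.

Lemma word_eval_is_mmorphism : mmorphism word_eval.
Proof. by split=> [m1 m2|]; rewrite /word_eval ?fmM ?big_cat // fm1 big_nil. Qed.

HB.instance Definition _ :=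
  isMultiplicative.Build {fmonom var} A word_eval word_eval_is_mmorphism.

Lemma pevalE f : peval ev f = mmap (in_alg A) word_eval f.
Proof. by rewrite /peval mmapE; apply: eq_bigr => m _; rewrite /= mulr_algl. Qed.

Lemma peval_is_zmod_morphism : zmod_morphism (peval ev).
Proof. by move=> f g; rewrite !pevalE raddfB. Qed.

Lemma peval_is_monoid_morphism : monoid_morphism (peval ev).
Proof.
have [evalM eval1] := commr_mmap_is_multiplicative (f := in_alg A) (h := word_eval)
  (fun _ _ _ => comm_alg _ _).
by split=> [|f g]; rewrite !pevalE ?eval1 ?evalM.
Qed.

Lemma peval_is_scalable : scalable (peval ev).
Proof. by move=> c f; rewrite !pevalE mmapZ /= mulr_algl. Qed.

HB.instance Definition _ :=
  GRing.isZmodMorphism.Build (FreeAlg F) A (peval ev) peval_is_zmod_morphism.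
HB.instance Definition _ :=
  GRing.isMonoidMorphism.Build (FreeAlg F) A (peval ev) peval_is_monoid_morphism.
HB.instance Definition _ :=
  GRing.isScalable.Build F (FreeAlg F) A *:%R (peval ev) peval_is_scalable.
End Evaluation.

Lemma eq_peval (A : algType F) (ev1 ev2 : var -> A) :
  ev1 =1 ev2 -> peval ev1 =1 peval ev2.
Proof.
by move=> eq_ev f; apply: eq_bigr => m _; congr (_ *: _); apply: eq_bigr => v _.
Qed.

Lemma rmorph_peval (A B : algType F) (psi : {rmorphism A -> B}) ev f :
  (forall k : F, psi k%:A = k%:A) -> psi (peval ev f) = peval (psi \o ev) f.
Proof.
move=> psi_alg; rewrite /peval rmorph_sum; apply: eq_bigr => m _.
by rewrite -mulr_algl rmorphM psi_alg rmorph_prod mulr_algl.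
Qed.

Definition fvar (v : var) : FreeAlg F := << FMonom [:: v] >>.

Lemma prod_fvar (s : seq var) : \prod_(v <- s) fvar v = << FMonom s >>.
Proof.
elim: s => [|v s IHs].
  by rewrite big_nil -mpolyC1E; congr << _ >>; apply: val_inj; rewrite /= fm1.
rewrite big_cons IHs /fvar malgM_def fgmulUU mulr1.
by congr << _ >>; apply: val_inj; rewrite /= fmM.
Qed.

Lemma lrmorph_fvar (A : algType F) (psi : {lrmorphism FreeAlg F -> A}) f :
  psi f = peval (psi \o fvar) f.
Proof.
rewrite {1}(monalgE f) linear_sum; apply: eq_bigr => m _.
have -> : << f@_m *g m >> = f@_m *: (<< m >> : FreeAlg F).
  by rewrite -mul_malgC malgM_def fgmulUU mulr1 mul1m.
by rewrite linearZ_LR -[m in << m >>]fmK -prod_fvar rmorph_prod.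
Qed.

Lemma peval_at0 (A : algType F) (g : FreeAlg F) :
  peval (fun _ => 0 : A) g = (g@_(mone : {fmonom var}))%:A.
Proof.
rewrite {2}(monalgE g) raddf_sum scaler_suml; apply: eq_bigr => m _.
rewrite /= mcoeffU; case: m => [[|v s]]; rewrite fmP fm1 /=.
  by rewrite big_nil mulr1n.
by rewrite big_cons mul0r scaler0 mulr0n scale0r.
Qed.

Lemma fvar_homogeneous v : homogeneous v.1 (fvar v).
Proof. by move=> m; rewrite msuppU1 inE => /eqP ->; rewrite /wparity /= addn0 oddb. Qed.
End FreeAlgebra.

Arguments fvar {F}.

Section GradedEvaluation.
Variables (F : fieldType) (A : algType F) (A0 A1 : A -> Prop).
Hypothesis superA : is_superalgebra A0 A1.

Lemma component_var (ev : var -> A) :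
  (forall i, A0 (ev (false, i))) -> (forall i, A1 (ev (true, i))) ->
  forall v, component A0 A1 v.1 (ev v).
Proof. by move=> ev0 ev1 [[] i]. Qed.

Lemma component_peval (ev : var -> A) b (g : FreeAlg F) :
  (forall v, component A0 A1 v.1 (ev v)) -> homogeneous b g ->
  component A0 A1 b (peval ev g).
Proof.
move=> ev_comp g_hom; have sub_b := component_subspace superA b.
rewrite /peval big_seq; apply: (big_ind (component A0 A1 b)).
- exact: subspace0 sub_b.
- exact: subspaceD sub_b.
move=> m m_supp; apply: (subspaceZ sub_b); rewrite -(g_hom m m_supp).
exact: component_prod.
Qed.
End GradedEvaluation.

Section CentralGradedRadical.
Variables (F : fieldType) (A : algType F) (A0 A1 : A -> Prop).
Hypotheses (charF0 : [pchar F] =i pred0) (superA : is_superalgebra A0 A1).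
Hypothesis decA : forall a : A, exists (k : F) (j : A), jacobson j /\ a = k%:A + j.
Hypothesis radical_scalar : forall k : F, jacobson (k%:A : A) -> k = 0.
Variable a : A.
Hypotheses (a_even : A0 a) (a_noncentral : ~ center a).

Lemma central_graded_jacobson (f : FreeAlg F) (ev : var -> A) :
  central_graded A0 A1 f ->
  (forall i, A0 (ev (false, i))) -> (forall i, A1 (ev (true, i))) ->
  jacobson (peval ev f).
Proof.
move=> [f_cst f_central] ev_even ev_odd.
have [w Jw] : exists w : var -> F, forall v, jacobson (ev v - (w v)%:A).
  apply: (choice (fun v k => jacobson (ev v - k%:A))) => v.
  by have [k [j [Jj ->]]] := decA (ev v); exists k; rewrite addrC addKr.
have w_odd i : w (true, i) = 0.
  exact: (odd_scalar_part_eq0 superA charF0 radical_scalar (ev_odd i) (Jw _)).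
pose q : {poly F} := peval (fun v => w v *: 'X) f.
have q_eval (x : A) : peval (fun v => w v *: x) f = horner_alg x q.
  rewrite (rmorph_peval (psi := horner_alg x)) => [|k /=]; last first.
    by rewrite alg_polyC horner_algC.
  apply: eq_peval => v /=.
  by rewrite -mul_polyC rmorphM /= horner_algC horner_algX mulr_algl.
have even_addr1 x : A0 x -> A0 (x + 1).
  by move=> x_even; apply: (subspaceD (even_subspace superA) x_even (even1 superA)).
have q_const : (size q <= 1)%N.
  apply: (central_on_size even_addr1 charF0 a_even a_noncentral) => x x_even.
  rewrite /= -q_eval; apply: f_central => i; first exact: (subspaceZ (even_subspace superA)).
  by rewrite w_odd scale0r; apply: (subspace0 (odd_subspace superA)).
have q_at1 : peval (fun v => w v *: (1 : A)) f = 0.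
  rewrite (q_eval 1) (size1_polyC q_const) horner_algC -(horner_algC (0 : A)).
  rewrite -(size1_polyC q_const) -(q_eval 0) (eq_peval (ev2 := fun _ => 0)) => [|v].
    by rewrite peval_at0 f_cst scale0r.
  exact: scaler0.
by rewrite -[peval ev f]subr0 -q_at1; apply: jacobson_pevalB.
Qed.
End CentralGradedRadical.

Section CentralGradedT2.
Variables (F : fieldType) (A : algType F) (A0 A1 : A -> Prop).
Hypothesis peval_jacobson : forall (f : FreeAlg F) (ev : var -> A),
  central_graded A0 A1 f ->
  (forall i, A0 (ev (false, i))) -> (forall i, A1 (ev (true, i))) ->
  jacobson (peval ev f).

Lemma central_graded_ideal :
  is_ideal (fun x : A => jacobson x /\ center x) -> is_ideal (central_graded A0 A1).
Proof.
case=> _ _ J'Ml J'Mr; split.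
- by split=> [|ev _ _]; rewrite ?mcoeff0 // raddf0; apply: center0.
- move=> f g [f_cst f_central] [g_cst g_central].
  split=> [|ev ev0 ev1]; first by rewrite mcoeffD f_cst g_cst addr0.
  by rewrite raddfD; apply: centerD; [apply: f_central | apply: g_central].
- move=> g f [f_cst f_central]; split=> [|ev ev0 ev1]; first by rewrite rmorphM /= f_cst mulr0.
  have J'f := conj (peval_jacobson (conj f_cst f_central) ev0 ev1) (f_central _ ev0 ev1).
  by rewrite rmorphM; case: (J'Ml (peval ev g) _ J'f).
- move=> g f [f_cst f_central]; split=> [|ev ev0 ev1]; first by rewrite rmorphM /= f_cst mul0r.
  have J'f := conj (peval_jacobson (conj f_cst f_central) ev0 ev1) (f_central _ ev0 ev1).
  by rewrite rmorphM; case: (J'Mr (peval ev g) _ J'f).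
Qed.

Hypothesis superA : is_superalgebra A0 A1.
Hypothesis radical_scalar : forall k : F, jacobson (k%:A : A) -> k = 0.

Lemma central_graded_endo (phi : {lrmorphism FreeAlg F -> FreeAlg F}) :
  (forall b f, homogeneous b f -> homogeneous b (phi f)) ->
  forall f, central_graded A0 A1 f -> central_graded A0 A1 (phi f).
Proof.
move=> phi_hom f [f_cst f_central].
have subst_graded (ev : var -> A) : (forall v, component A0 A1 v.1 (ev v)) ->
    forall v, component A0 A1 v.1 (peval ev (phi (fvar v))).
  move=> ev_comp v; apply: (component_peval superA ev_comp).
  by apply: phi_hom; apply: fvar_homogeneous.
have phi_fE (ev : var -> A) : peval ev (phi f) = peval (peval ev \o phi \o fvar) f.
  exact: (lrmorph_fvar (peval ev \o phi)).
split.
  apply: radical_scalar; rewrite -peval_at0 phi_fE.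
  have zero_graded (v : var) : component A0 A1 v.1 (0 : A).
    exact: subspace0 (component_subspace superA v.1).
  apply: peval_jacobson (conj f_cst f_central) _ _ => i.
    exact: (subst_graded _ zero_graded (false, i)).
  exact: (subst_graded _ zero_graded (true, i)).
move=> ev ev0 ev1; rewrite phi_fE; apply: f_central => i.
  exact: (subst_graded _ (component_var ev0 ev1) (false, i)).
exact: (subst_graded _ (component_var ev0 ev1) (true, i)).
Qed.
End CentralGradedT2.

Theorem proposition2p2 (F : fieldType) (A : algType F) (A0 A1 : A -> Prop) :
  [pchar F] =i pred0 ->
  is_superalgebra A0 A1 ->
  (* A = F.1 (+) J(A) *)
  (forall a : A, exists (k : F) (j : A), jacobson j /\ a = k%:A + j) ->
  (forall k : F, jacobson (k%:A : A) -> k = 0) ->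
  (* A0 is not contained in Z(A) *)
  (exists a : A, A0 a /\ ~ center a) ->
  (* Z(A) = F.1 (+) J', with J' = J(A) cap Z(A) *)
  ((forall k : F, center (k%:A : A)) /\
   (forall k : F, jacobson (k%:A : A) /\ center (k%:A : A) -> k = 0) /\
   (forall z : A, center z ->
      exists (k : F) (j : A), [/\ jacobson j, center j & z = k%:A + j]))
  /\
  (is_ideal (fun x : A => jacobson x /\ center x) ->
   is_graded A0 A1 (fun x : A => jacobson x /\ center x) ->
   is_T2_ideal (central_graded A0 A1)).
Proof.
move=> charF0 superA decA radical_scalar [a [a_even a_noncentral]].
split.
  split; first exact: center_alg.
  by split; [move=> k [Jk _]; apply: radical_scalar | apply: center_decomposition].
move=> J'_ideal _.
have Jf := central_graded_jacobson charF0 superA decA radical_scalar a_even a_noncentral.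
by split; [apply: central_graded_ideal | apply: central_graded_endo].
Qed.
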